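(* Let $f_1,f_2$ be strongly hyperbolic functions. Given $C\in\mathcal{C}^-(f_1,f_2)$ and two points $p\in C$, $q\notin C$ with $q$ not parallel to $p$, there exists $D\in\mathcal{C}^-(f_1,f_2)$ with $p,q\in D$ and $C\cap D=\{p\}$.
   Context: Identify $\mathbb{S}^1$ with $\mathbb{R}\cup\{\infty\}$, $\mathcal{P}=\mathbb{S}^1\times\mathbb{S}^1$, $\mathbb{R}^+=(0,\infty)$. Two points of $\mathcal{P}$ are parallel if they have the same first coordinate or the same second coordinate. A function $f:\mathbb{R}^+\to\mathbb{R}^+$ is strongly hyperbolic if: (1) $\lim_{x\to0+}f(x)=+\infty$, $\lim_{x\to+\infty}f(x)=0$; (2) $f$ strictly convex; (3) $\lim_{x\to+\infty}f(x+b)/f(x)=1$ for each $b\in\mathbb{R}$; (4) $f$ differentiable; (5) $\ln|f'|$ strictly convex. For $a>0$, $b,c\in\mathbb{R}$: $f_{a,b,c}(x)=af_1(x+b)+c$ for $x>-b$, $f_{a,b,c}(x)=-af_2(-x-b)+c$ for $x<-b$; $\overline{f_{a,b,c}}=\{(x,f_{a,b,c}(x)):x\ne-b\}\cup\{(-b,\infty),(\infty,c)\}$; $\overline{l_{s,t}}=\{(x,sx+t):x\in\mathbb{R}\}\cup\{(\infty,\infty)\}$; $\mathcal{C}^-(f_1,f_2)=\{\overline{f_{a,b,c}}:a>0,b,c\in\mathbb{R}\}\cup\{\overline{l_{s,t}}:s<0,t\in\mathbb{R}\}$. *)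

From Stdlib Require Import Reals.
From Coquelicot Require Import Coquelicot.
Open Scope R_scope.

(* S^1 = R ∪ {∞}: [Some x] is the real x, [None] is ∞. *)
Definition S1 := option R.
Definition P := (S1 * S1)%type.

Definition parallel (p q : P) : Prop := fst p = fst q \/ snd p = snd q.

Definition strictly_convex_pos (g : R -> R) : Prop :=
  forall x y t, 0 < x -> 0 < y -> x <> y -> 0 < t < 1 ->
    g (t * x + (1 - t) * y) < t * g x + (1 - t) * g y.

(* f : R^+ -> R^+ is modelled as f : R -> R; only its values on (0,+oo) matter. *)
Definition strongly_hyperbolic (f : R -> R) : Prop :=
  (forall x, 0 < x -> 0 < f x) /\
  (* (1) *)
  filterlim f (at_right 0) (Rbar_locally p_infty) /\
  filterlim f (Rbar_locally p_infty) (locally 0) /\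
  (* (2) *)
  strictly_convex_pos f /\
  (* (3) *)
  (forall b : R, filterlim (fun x => f (x + b) / f x) (Rbar_locally p_infty) (locally 1)) /\
  (* (4) *)
  (forall x, 0 < x -> ex_derive f x) /\
  (* (5) *)
  strictly_convex_pos (fun x => ln (Rabs (Derive f x))).

(* f_{a,b,c} (its value at x = -b is irrelevant) *)
Definition fabc (f1 f2 : R -> R) (a b c : R) (x : R) : R :=
  if Rlt_dec (- b) x then a * f1 (x + b) + c else - a * f2 (- x - b) + c.

Definition fbar (f1 f2 : R -> R) (a b c : R) (z : P) : Prop :=
  (exists x, x <> - b /\ z = (Some x, Some (fabc f1 f2 a b c x))) \/
  z = (Some (- b), None) \/ z = (None, Some c).

Definition lbar (s t : R) (z : P) : Prop :=
  (exists x, z = (Some x, Some (s * x + t))) \/ z = (None, None).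

Definition in_Cminus (f1 f2 : R -> R) (C : P -> Prop) : Prop :=
  (exists a b c, 0 < a /\ C = fbar f1 f2 a b c) \/
  (exists s t, s < 0 /\ C = lbar s t).

(* Let p = (x0, y0) be a finite point of C and m < 0 the slope of C at p. The curves of
   C^-(f1, f2) tangent to C at p form a pencil: the tangent line and, for each u > 0, the
   curve whose right (resp. left) branch passes through p at distance u from its vertical
   asymptote. Two distinct members meet only at p. On its right branch the member with
   parameter u is y0 + m (f1 (u + t) - f1 u) / f1' u, t = x - x0, and the difference of two
   such functions has a strict extremum 0 at t = 0 because f1' (t + d) / f1' t increases
   with t, which is the strict convexity of ln |f1'|; elsewhere the curves are separated by
   the tangent line and the asymptotes. Conversely, by the intermediate value theorem every
   point not parallel to p lies on some member, the end behaviour of the quotients involved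
   coming from (1), (3) and convexity. If p is at infinity, a translate of C or a parallel
   line works. The point reflection (x, y) |-> (-x, -y) exchanges f1 and f2 and reduces left
   branches to right ones. *)

From Stdlib Require Import Reals Lra Ranalysis5 Classical.
From Coquelicot Require Import Coquelicot.
Open Scope R_scope.

Lemma exists_pos_below a b : 0 < a -> 0 < b -> exists h, 0 < h /\ h < a /\ h < b.
Proof.
  intros Ha Hb. exists (Rmin a b / 2).
  pose proof (Rmin_l a b). pose proof (Rmin_r a b).
  assert (0 < Rmin a b) by (apply Rmin_glb_lt; assumption). lra.
Qed.

Lemma exists_above a b : exists s, a < s /\ b < s.
Proof. exists (Rmax a b + 1). pose proof (Rmax_l a b). pose proof (Rmax_r a b). lra. Qed.

Lemma IVT_strict (phi : R -> R) a b y : a < b ->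
  (forall x, a <= x <= b -> continuity_pt phi x) -> (phi a - y) * (phi b - y) < 0 ->
  exists c, a < c < b /\ phi c = y.
Proof.
  intros Hab Hc Hy.
  assert (Hcy : forall x, a <= x <= b -> continuity_pt (fun x => phi x - y) x).
  { intros x Hx. apply continuity_pt_minus; [apply Hc, Hx| apply continuity_pt_const; now intros ? ?]. }
  assert (Hyc : forall x, a <= x <= b -> continuity_pt (fun x => y - phi x) x).
  { intros x Hx. apply continuity_pt_minus; [apply continuity_pt_const; now intros ? ?| apply Hc, Hx]. }
  assert (Hay : phi a <> y) by (intro E; rewrite E, Rminus_diag, Rmult_0_l in Hy; lra).
  assert (Hc' : exists c, a <= c <= b /\ phi c = y).
  { destruct (Rlt_or_le (phi a) y) as [Ha|Ha].
    - destruct (IVT_interv _ a b Hcy Hab ltac:(lra) ltac:(nra)) as [c [Hc1 Hc2]].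
      exists c. cbv beta in Hc2. split; [exact Hc1| lra].
    - destruct (IVT_interv _ a b Hyc Hab ltac:(cbv beta; lra) ltac:(cbv beta; nra)) as [c [Hc1 Hc2]].
      exists c. cbv beta in Hc2. split; [exact Hc1| lra]. }
  destruct Hc' as [c [Hc1 Hc2]]. exists c. split; [|exact Hc2].
  assert (c <> a) by (intros ->; rewrite Hc2, Rminus_diag, Rmult_0_l in Hy; lra).
  assert (c <> b) by (intros ->; rewrite Hc2, Rminus_diag, Rmult_0_r in Hy; lra).
  lra.
Qed.

Lemma incr_on_segment (k dk : R -> R) a b : a < b ->
  (forall x, a <= x <= b -> is_derive k x (dk x)) -> (forall x, a < x < b -> 0 < dk x) -> k a < k b.
Proof.
  intros Hab Hd Hpos.
  destruct (MVT_cor2 k dk a b Hab) as [c [E Hc]].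
  { intros x Hx. apply is_derive_Reals, Hd, Hx. }
  specialize (Hpos c Hc). nra.
Qed.

Lemma decr_on_segment (k dk : R -> R) a b : a < b ->
  (forall x, a <= x <= b -> is_derive k x (dk x)) -> (forall x, a < x < b -> dk x < 0) -> k b < k a.
Proof.
  intros Hab Hd Hneg.
  destruct (MVT_cor2 k dk a b Hab) as [c [E Hc]].
  { intros x Hx. apply is_derive_Reals, Hd, Hx. }
  specialize (Hneg c Hc). nra.
Qed.

Lemma Rlt_div_l_neg a b c : c < 0 -> (a / c < b <-> b * c < a).
Proof.
  intros Hc. replace (a / c) with (- a / - c) by (field; lra).
  rewrite Rlt_div_l by lra. lra.
Qed.

Lemma Rlt_div_r_neg a b c : c < 0 -> (b < a / c <-> a < b * c).
Proof.
  intros Hc. replace (a / c) with (- a / - c) by (field; lra).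
  split; intros H.
  - apply Rlt_div_r in H; lra.
  - apply Rlt_div_r; lra.
Qed.

Lemma Rabs_strictly_between a b c : (c - a) * (c - b) < 0 -> Rabs (c - a) < Rabs (b - a).
Proof.
  intros H. unfold Rabs. destruct (Rcase_abs (c - a)); destruct (Rcase_abs (b - a)); nra.
Qed.

(** * Strictly convex functions on (0, +oo) *)

Section StrictlyConvex.

Variable g : R -> R.
Hypothesis g_convex : strictly_convex_pos g.

Lemma strictly_convex_three_points x y z :
  0 < x -> x < y -> y < z -> (z - x) * g y < (z - y) * g x + (y - x) * g z.
Proof.
  intros Hx Hxy Hyz. set (t := (z - y) / (z - x)).
  assert (Ht : 0 < t < 1).
  { unfold t; split; [apply Rdiv_lt_0_compat; lra|].
    apply (Rmult_lt_reg_r (z - x)); [lra|]. unfold Rdiv. rewrite Rmult_assoc, Rinv_l; lra. }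
  pose proof (g_convex x z t Hx ltac:(lra) ltac:(lra) Ht) as H.
  replace (t * x + (1 - t) * z) with y in H by (unfold t; field; lra).
  replace ((z - y) * g x + (y - x) * g z) with ((z - x) * (t * g x + (1 - t) * g z))
    by (unfold t; field; lra).
  apply Rmult_lt_compat_l; lra.
Qed.

Lemma strictly_convex_increments s t d :
  0 < s -> s < t -> 0 < d -> g (s + d) - g s < g (t + d) - g t.
Proof.
  intros Hs Hst Hd.
  pose proof (strictly_convex_three_points s (s + d) (t + d) Hs ltac:(lra) ltac:(lra)).
  pose proof (strictly_convex_three_points s t (t + d) Hs Hst ltac:(lra)).
  apply (Rmult_lt_reg_l (t + d - s)); nra.
Qed.

Variable dg : R -> R.
Hypothesis g_derive : forall x, 0 < x -> is_derive g x (dg x).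

Lemma derive_approx x eps : 0 < x -> 0 < eps -> exists delta, 0 < delta /\
  forall h, 0 < Rabs h < delta -> Rabs (g (x + h) - g x - dg x * h) < eps * Rabs h.
Proof.
  intros Hx He.
  destruct (proj1 (is_derive_Reals _ _ _) (g_derive x Hx) eps He) as [delta Hd].
  exists delta; split; [apply cond_pos|]. intros h [Hh Hhd].
  assert (Hh0 : h <> 0) by (intro E; rewrite E, Rabs_R0 in Hh; lra).
  replace (g (x + h) - g x - dg x * h) with (((g (x + h) - g x) / h - dg x) * h)
    by (field; exact Hh0).
  rewrite Rabs_mult. apply Rmult_lt_compat_r; [exact Hh| exact (Hd h Hh0 Hhd)].
Qed.

Lemma derive_le_chord x y : 0 < x -> x < y -> dg x * (y - x) <= g y - g x.
Proof.
  intros Hx Hxy. apply Rnot_lt_le; intro Hlt.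
  set (eps := (dg x * (y - x) - (g y - g x)) / (y - x)).
  assert (Heps : 0 < eps) by (apply Rdiv_lt_0_compat; lra).
  assert (E : eps * (y - x) = dg x * (y - x) - (g y - g x)) by (unfold eps; field; lra).
  destruct (derive_approx x eps Hx Heps) as [delta [Hdelta Happ]].
  destruct (exists_pos_below delta (y - x) Hdelta ltac:(lra)) as [h [Hh [Hhd Hhy]]].
  specialize (Happ h ltac:(rewrite Rabs_pos_eq; lra)).
  rewrite (Rabs_pos_eq h) in Happ by lra. apply Rabs_lt_between in Happ.
  pose proof (strictly_convex_three_points x (x + h) y Hx ltac:(lra) ltac:(lra)).
  assert (0 < (y - x) * (g (x + h) - g x - dg x * h + eps * h)) by (apply Rmult_lt_0_compat; lra).
  assert (h * (eps * (y - x)) = h * (dg x * (y - x) - (g y - g x))) by (rewrite E; ring).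
  lra.
Qed.

Lemma chord_le_derive x y : 0 < x -> x < y -> g y - g x <= dg y * (y - x).
Proof.
  intros Hx Hxy. apply Rnot_lt_le; intro Hlt.
  set (eps := ((g y - g x) - dg y * (y - x)) / (y - x)).
  assert (Heps : 0 < eps) by (apply Rdiv_lt_0_compat; lra).
  assert (E : eps * (y - x) = (g y - g x) - dg y * (y - x)) by (unfold eps; field; lra).
  destruct (derive_approx y eps ltac:(lra) Heps) as [delta [Hdelta Happ]].
  destruct (exists_pos_below delta (y - x) Hdelta ltac:(lra)) as [h [Hh [Hhd Hhy]]].
  specialize (Happ (- h) ltac:(rewrite Rabs_Ropp, Rabs_pos_eq; lra)).
  rewrite Rabs_Ropp, (Rabs_pos_eq h) in Happ by lra. apply Rabs_lt_between in Happ.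
  replace (y + - h) with (y - h) in Happ by ring.
  pose proof (strictly_convex_three_points x (y - h) y Hx ltac:(lra) ltac:(lra)).
  assert (0 < (y - x) * (g (y - h) - g y + dg y * h + eps * h)) by (apply Rmult_lt_0_compat; lra).
  assert (h * (eps * (y - x)) = h * ((g y - g x) - dg y * (y - x))) by (rewrite E; ring).
  lra.
Qed.

Lemma derive_chord_lt x y : 0 < x -> x < y -> dg x * (y - x) < g y - g x < dg y * (y - x).
Proof.
  intros Hx Hxy. set (z := (x + y) / 2).
  pose proof (strictly_convex_three_points x z y Hx ltac:(unfold z; lra) ltac:(unfold z; lra)) as K.
  replace (y - z) with ((y - x) / 2) in K by (unfold z; field).
  replace (z - x) with ((y - x) / 2) in K by (unfold z; field).
  assert (Hmid : g z < (g x + g y) / 2).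
  { apply (Rmult_lt_reg_l (y - x)); lra. }
  pose proof (derive_le_chord x z Hx ltac:(unfold z; lra)).
  pose proof (chord_le_derive z y ltac:(unfold z; lra) ltac:(unfold z; lra)).
  replace (z - x) with ((y - x) / 2) in * by (unfold z; field).
  replace (y - z) with ((y - x) / 2) in * by (unfold z; field).
  lra.
Qed.

Lemma derive_tangent_lt x t : 0 < x -> 0 < t -> t <> x -> g x + dg x * (t - x) < g t.
Proof.
  intros Hx Ht Hne. destruct (Rlt_or_le x t) as [Hxt|Htx].
  - pose proof (derive_chord_lt x t Hx Hxt). lra.
  - pose proof (derive_chord_lt t x Ht ltac:(lra)). lra.
Qed.

Lemma derive_incr x y : 0 < x -> x < y -> dg x < dg y.
Proof.
  intros Hx Hxy. pose proof (derive_chord_lt x y Hx Hxy).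
  apply (Rmult_lt_reg_r (y - x)); lra.
Qed.

(* dg y is squeezed between chord slopes on either side of x, which are close to dg x. *)
Lemma derive_continuous x : 0 < x -> continuity_pt dg x.
Proof.
  intros Hx eps He.
  destruct (derive_approx x (eps / 2) Hx ltac:(lra)) as [delta [Hdelta Happ]].
  destruct (exists_pos_below delta x Hdelta Hx) as [h [Hh [Hhd Hhx]]].
  pose proof (Happ h ltac:(rewrite Rabs_pos_eq; lra)) as Ap.
  pose proof (Happ (- h) ltac:(rewrite Rabs_Ropp, Rabs_pos_eq; lra)) as Am.
  rewrite (Rabs_pos_eq h) in Ap by lra. rewrite Rabs_Ropp, (Rabs_pos_eq h) in Am by lra.
  apply Rabs_lt_between in Ap. apply Rabs_lt_between in Am.
  replace (x + - h) with (x - h) in Am by ring.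
  exists (h / 2); split; [lra|].
  intros y [_ Hy]. simpl in Hy |- *. unfold R_dist in Hy |- *.
  apply Rabs_lt_between in Hy. apply Rabs_lt_between.
  destruct (Rtotal_order y x) as [Hyx|[->|Hxy]].
  - pose proof (derive_incr y x ltac:(lra) Hyx).
    pose proof (derive_chord_lt (x - h) y ltac:(lra) ltac:(lra)).
    pose proof (derive_chord_lt y x ltac:(lra) Hyx).
    split; nra.
  - lra.
  - pose proof (derive_incr x y Hx Hxy).
    pose proof (derive_chord_lt y (x + h) ltac:(lra) ltac:(lra)).
    pose proof (derive_chord_lt x y Hx Hxy).
    split; nra.
Qed.

End StrictlyConvex.

(** * Strongly hyperbolic functions *)

Definition normalized_increment (f : R -> R) (u t : R) : R := (f (u + t) - f u) / Derive f u.

Section StronglyHyperbolic.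

Variable f : R -> R.
Hypothesis Hf : strongly_hyperbolic f.

Lemma sh_pos x : 0 < x -> 0 < f x.
Proof. destruct Hf as (pos & _). apply pos. Qed.

Lemma sh_ex_derive x : 0 < x -> ex_derive f x.
Proof. destruct Hf as (_ & _ & _ & _ & _ & der & _). apply der. Qed.

Lemma sh_is_derive x : 0 < x -> is_derive f x (Derive f x).
Proof. intros Hx. apply Derive_correct, sh_ex_derive, Hx. Qed.

Lemma sh_continuous x : 0 < x -> continuity_pt f x.
Proof.
  intros Hx. apply derivable_continuous_pt. exists (Derive f x).
  apply is_derive_Reals, sh_is_derive, Hx.
Qed.

Lemma sh_large_near_0 K : exists d, 0 < d /\ forall x, 0 < x < d -> K < f x.
Proof.
  destruct Hf as (_ & lim0 & _).
  destruct (lim0 (fun y => K < y) ltac:(exists K; auto)) as [d Hd].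
  exists d; split; [apply cond_pos|]. intros x [Hx Hxd]. apply Hd; [|exact Hx].
  change (Rabs (x - 0) < d). rewrite Rminus_0_r, Rabs_pos_eq; lra.
Qed.

Lemma sh_small_near_infty eps : 0 < eps -> exists M, forall x, M < x -> f x < eps.
Proof.
  intros He. destruct Hf as (_ & _ & liminf & _).
  destruct (proj1 (filterlim_locally _ _) liminf (mkposreal eps He)) as [M HM].
  exists M. intros x Hx. specialize (HM x Hx).
  change (Rabs (f x - 0) < eps) in HM. apply Rabs_lt_between in HM. lra.
Qed.

Lemma sh_shift_ratio b eps : 0 < eps ->
  exists M, forall x, M < x -> Rabs (f (x + b) / f x - 1) < eps.
Proof.
  intros He. destruct Hf as (_ & _ & _ & _ & ratio & _).
  exact (proj1 (filterlim_locally _ _) (ratio b) (mkposreal eps He)).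
Qed.

Lemma sh_Derive_chord x y : 0 < x -> x < y ->
  Derive f x * (y - x) < f y - f x < Derive f y * (y - x).
Proof. destruct Hf as (_ & _ & _ & conv & _). apply derive_chord_lt, sh_is_derive; exact conv. Qed.

Lemma sh_tangent_lt x t : 0 < x -> 0 < t -> t <> x -> f x + Derive f x * (t - x) < f t.
Proof. destruct Hf as (_ & _ & _ & conv & _). apply derive_tangent_lt, sh_is_derive; exact conv. Qed.

Lemma sh_Derive_incr x y : 0 < x -> x < y -> Derive f x < Derive f y.
Proof. destruct Hf as (_ & _ & _ & conv & _). apply (derive_incr f conv), sh_is_derive. Qed.

Lemma sh_Derive_continuous x : 0 < x -> continuity_pt (Derive f) x.
Proof. destruct Hf as (_ & _ & _ & conv & _). apply (derive_continuous f conv), sh_is_derive. Qed.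

Lemma sh_decr x y : 0 < x -> x < y -> f y < f x.
Proof.
  intros Hx Hxy. apply Rnot_le_lt. intro Hle.
  destruct (sh_small_near_infty (f y) (sh_pos y ltac:(lra))) as [M HM].
  destruct (exists_above M y) as [z [HMz Hyz]].
  destruct Hf as (_ & _ & _ & conv & _).
  pose proof (strictly_convex_three_points f conv x y z Hx Hxy Hyz).
  specialize (HM z HMz). nra.
Qed.

Lemma sh_Derive_neg x : 0 < x -> Derive f x < 0.
Proof.
  intros Hx. pose proof (sh_Derive_chord x (x + 1) Hx ltac:(lra)).
  pose proof (sh_decr x (x + 1) Hx ltac:(lra)). lra.
Qed.

Lemma sh_Derive_ratio_incr s t d : 0 < s -> s < t -> 0 < d ->
  Derive f (s + d) / Derive f s < Derive f (t + d) / Derive f t.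
Proof.
  intros Hs Hst Hd. destruct Hf as (_ & _ & _ & _ & _ & _ & lnconv).
  pose proof (strictly_convex_increments _ lnconv s t d Hs Hst Hd) as K. simpl in K.
  pose proof (sh_Derive_neg s Hs). pose proof (sh_Derive_neg t ltac:(lra)).
  pose proof (sh_Derive_neg (s + d) ltac:(lra)). pose proof (sh_Derive_neg (t + d) ltac:(lra)).
  rewrite <- !ln_div in K by (apply Rabs_pos_lt; lra).
  apply ln_lt_inv in K; try (apply Rdiv_lt_0_compat; apply Rabs_pos_lt; lra).
  rewrite !Rabs_left in K by lra.
  replace (Derive f (s + d) / Derive f s) with (- Derive f (s + d) / - Derive f s) by (field; lra).
  replace (Derive f (t + d) / Derive f t) with (- Derive f (t + d) / - Derive f t) by (field; lra).
  exact K.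
Qed.

Lemma sh_shift_lt_of_Derive_shift_gt d L : 0 < d -> 0 < L ->
  (forall t, 0 < t -> L * Derive f t < Derive f (t + d)) -> forall t, 0 < t -> f (t + d) < L * f t.
Proof.
  intros Hd HL HD.
  set (k := fun x => f (x + d) - L * f x).
  assert (k_incr : forall x y, 0 < x -> x < y -> k x < k y).
  { intros x y Hx Hxy.
    apply (incr_function k 0 p_infty (fun x => Derive f (x + d) - L * Derive f x)); simpl; auto.
    - intros z Hz _. unfold k. auto_derive.
      + repeat split; apply sh_ex_derive; lra.
      + change (fun x => f x) with f. ring.
    - intros z Hz _. pose proof (HD z Hz). lra. }
  intros x Hx. pose proof (k_incr x (x + 1) Hx ltac:(lra)).
  enough (k (x + 1) <= 0) by (unfold k in *; lra).
  apply Rnot_lt_le. intro Hk.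
  destruct (sh_small_near_infty (k (x + 1)) Hk) as [M HM].
  destruct (exists_above M (x + 1)) as [s [HMs Hs]].
  pose proof (k_incr (x + 1) s ltac:(lra) Hs). specialize (HM (s + d) ltac:(lra)).
  pose proof (sh_pos s ltac:(lra)). unfold k in *. nra.
Qed.

(* The ratio increases; if it stayed below 1 - e, then f (t + d) < (1 - e) f t for all t,
   contradicting (3). *)
Lemma sh_Derive_ratio_eventually d e : 0 < d -> 0 < e ->
  exists M, 0 < M /\ forall u, M < u -> 1 - e < Derive f (u + d) / Derive f u.
Proof.
  intros Hd He. set (L := 1 - e).
  destruct (classic (exists t, 0 < t /\ L < Derive f (t + d) / Derive f t)) as [[t [Ht HL]]|Hnone].
  { exists t; split; [exact Ht|]. intros u Hu.
    pose proof (sh_Derive_ratio_incr t u d Ht Hu Hd). lra. }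
  exfalso.
  assert (HD : forall t, 0 < t -> L * Derive f t < Derive f (t + d)).
  { intros t Ht. pose proof (sh_Derive_ratio_incr t (t + 1) d Ht ltac:(lra) Hd).
    assert (~ L < Derive f (t + 1 + d) / Derive f (t + 1))
      by (intro; apply Hnone; exists (t + 1); split; [lra| auto]).
    apply (Rlt_div_l_neg _ _ _ (sh_Derive_neg t Ht)). lra. }
  assert (HL : 0 < L).
  { pose proof (HD 1 ltac:(lra)). pose proof (sh_Derive_neg 1 ltac:(lra)).
    pose proof (sh_Derive_neg (1 + d) ltac:(lra)). nra. }
  destruct (sh_shift_ratio d e He) as [M HM].
  destruct (exists_above M 0) as [t [HMt Ht]].
  specialize (HM t HMt). apply Rabs_lt_between in HM.
  pose proof (sh_shift_lt_of_Derive_shift_gt d L Hd HL HD t Ht).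
  assert (f (t + d) / f t < L) by (apply Rlt_div_l; [apply sh_pos, Ht| lra]).
  unfold L in *. lra.
Qed.

Lemma sh_Derive_ratio_lim X e : 0 < e -> exists M, 0 < M /\ forall u, M < u ->
  0 < u + X /\ Rabs (Derive f (u + X) / Derive f u - 1) < e.
Proof.
  intros He. destruct (Rtotal_order X 0) as [HX|[->|HX]].
  - set (e' := e / (1 + e)).
    assert (He' : (1 - e') * (1 + e) = 1) by (unfold e'; field; lra).
    destruct (sh_Derive_ratio_eventually (- X) e' ltac:(lra)
      ltac:(unfold e'; apply Rdiv_lt_0_compat; lra)) as [M [HM HMu]].
    exists (M - X). split; [lra|]. intros u Hu. split; [lra|].
    specialize (HMu (u + X) ltac:(lra)). replace (u + X + - X) with u in HMu by ring.
    pose proof (sh_Derive_neg u ltac:(lra)). pose proof (sh_Derive_neg (u + X) ltac:(lra)).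
    pose proof (sh_Derive_incr (u + X) u ltac:(lra) ltac:(lra)).
    set (A := Derive f (u + X)) in *. set (B := Derive f u) in *.
    assert (HBA : B < (1 - e') * A).
    { assert (EA : B / A * A = B) by (field; lra). nra. }
    assert (Hgt : 1 < A / B) by (apply Rlt_div_r_neg; lra).
    assert (Hlt : A / B < 1 + e) by (apply Rlt_div_l_neg; nra).
    rewrite Rabs_pos_eq; lra.
  - exists 1. split; [lra|]. intros u Hu. split; [lra|].
    rewrite Rplus_0_r, Rdiv_diag, Rminus_diag, Rabs_R0; [lra|].
    pose proof (sh_Derive_neg u ltac:(lra)). lra.
  - destruct (sh_Derive_ratio_eventually X e HX He) as [M [HM HMu]].
    exists M. split; [lra|]. intros u Hu. split; [lra|]. specialize (HMu u Hu).
    pose proof (sh_Derive_neg u ltac:(lra)). pose proof (sh_Derive_incr u (u + X) ltac:(lra) ltac:(lra)).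
    assert (Derive f (u + X) / Derive f u < 1).
    { apply Rlt_div_l_neg; lra. }
    rewrite Rabs_left; lra.
Qed.

Lemma sh_increment_between u X : 0 < u -> 0 < u + X -> X <> 0 ->
  Derive f u * X < f (u + X) - f u < Derive f (u + X) * X.
Proof.
  intros Hu HuX HX. destruct (Rlt_or_le 0 X) as [Hp|Hn].
  - pose proof (sh_Derive_chord u (u + X) Hu ltac:(lra)) as Hc.
    replace (u + X - u) with X in Hc by ring. exact Hc.
  - pose proof (sh_Derive_chord (u + X) u HuX ltac:(lra)) as Hc.
    replace (u - (u + X)) with (- X) in Hc by ring. lra.
Qed.

Lemma normalized_increment_lim X e : 0 < e -> exists M, 0 < M /\ forall u, M < u ->
  0 < u + X /\ Rabs (normalized_increment f u X - X) < e.
Proof.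
  intros He. destruct (Req_dec X 0) as [->|HX].
  { exists 1. split; [lra|]. intros u Hu. split; [lra|].
    unfold normalized_increment.
    rewrite Rplus_0_r, Rminus_diag, Rdiv_0_l, Rminus_0_r, Rabs_R0. exact He. }
  assert (HaX : 0 < Rabs X) by (apply Rabs_pos_lt, HX).
  destruct (sh_Derive_ratio_lim X (e / Rabs X) ltac:(apply Rdiv_lt_0_compat; lra)) as [M [HM HMu]].
  exists M. split; [exact HM|]. intros u Hu. destruct (HMu u Hu) as [HuX Hr]. split; [exact HuX|].
  pose proof (sh_Derive_neg u ltac:(lra)) as HA.
  pose proof (sh_increment_between u X ltac:(lra) HuX HX) as [Hlo Hhi].
  unfold normalized_increment.
  set (D := f (u + X) - f u) in *. set (A := Derive f u) in *. set (B := Derive f (u + X)) in *.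
  assert (Hbt : (D / A - X) * (D / A - X * (B / A)) < 0).
  { replace ((D / A - X) * (D / A - X * (B / A))) with ((D - A * X) * (D - B * X) / (A * A))
      by (field; lra).
    apply Rdiv_neg_pos; nra. }
  apply Rlt_le_trans with (Rabs (X * (B / A) - X)); [apply Rabs_strictly_between, Hbt|].
  replace (X * (B / A) - X) with (X * (B / A - 1)) by ring. rewrite Rabs_mult.
  apply Rle_trans with (Rabs X * (e / Rabs X)); [apply Rmult_le_compat_l; [apply Rabs_pos| lra]|].
  right. field. lra.
Qed.

Lemma sh_over_Derive_near_0 e : 0 < e -> exists d, 0 < d /\ forall v, 0 < v < d ->
  f v < e * - Derive f v /\ 1 < e * - Derive f v.
Proof.
  intros He. set (w := e / 4).
  destruct (sh_large_near_0 (Rmax (2 * f w) 1)) as [d0 [Hd0 Hlarge]].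
  destruct (exists_pos_below d0 w Hd0 ltac:(unfold w; lra)) as [d [Hd [Hdd0 Hdw]]].
  exists d. split; [exact Hd|]. intros v [Hv Hvd].
  specialize (Hlarge v ltac:(lra)).
  pose proof (Rmax_l (2 * f w) 1). pose proof (Rmax_r (2 * f w) 1).
  pose proof (sh_Derive_chord v w Hv ltac:(lra)) as [Hc _].
  pose proof (sh_pos w ltac:(unfold w; lra)). pose proof (sh_Derive_neg v Hv).
  assert (f v < 2 * (w - v) * - Derive f v) by nra.
  assert (2 * (w - v) * - Derive f v < e * - Derive f v)
    by (apply Rmult_lt_compat_r; unfold w in *; lra).
  split; lra.
Qed.

Lemma sh_over_Derive_large K : exists M, 0 < M /\ forall u, M < u -> K * - Derive f u < f u.
Proof.
  set (L := 2 * Rabs K + 2).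
  destruct (sh_Derive_ratio_lim L (1 / 2) ltac:(lra)) as [M [HM HMu]].
  exists M. split; [exact HM|]. intros u Hu. destruct (HMu u Hu) as [HuL Hr].
  apply Rabs_lt_between in Hr.
  pose proof (sh_Derive_neg u ltac:(lra)).
  assert (HL : 0 < L) by (unfold L; pose proof (Rabs_pos K); lra).
  pose proof (sh_Derive_chord u (u + L) ltac:(lra) ltac:(lra)) as [_ Hc].
  pose proof (sh_pos (u + L) ltac:(lra)).
  assert (E : Derive f (u + L) / Derive f u * Derive f u = Derive f (u + L)) by (field; lra).
  assert (Derive f (u + L) < 1 / 2 * Derive f u) by nra.
  replace (u + L - u) with L in Hc by ring.
  assert (L * Derive f (u + L) < L * (1 / 2 * Derive f u))
    by (apply Rmult_lt_compat_l; assumption).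
  assert (K * - Derive f u <= Rabs K * - Derive f u) by (apply Rmult_le_compat_r; [lra| apply Rle_abs]).
  unfold L in *. lra.
Qed.

Lemma sh_surj y : 0 < y -> exists x, 0 < x /\ f x = y.
Proof.
  intros Hy. destruct (sh_large_near_0 y) as [d [Hd Hlarge]].
  destruct (sh_small_near_infty y Hy) as [M HM].
  destruct (exists_above M d) as [s [HMs Hds]].
  destruct (IVT_strict f (d / 2) s y ltac:(lra)) as [c [Hc Hfc]].
  - intros x Hx. apply sh_continuous. lra.
  - pose proof (Hlarge (d / 2) ltac:(lra)). pose proof (HM s HMs). nra.
  - exists c. split; [lra| exact Hfc].
Qed.

Lemma continuity_pt_over_Derive (N : R -> R) x : 0 < x -> continuity_pt N x ->
  continuity_pt (fun u => N u / Derive f u) x.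
Proof.
  intros Hx HN. apply continuity_pt_div; [exact HN| apply sh_Derive_continuous, Hx|].
  pose proof (sh_Derive_neg x Hx). lra.
Qed.

Lemma sh_over_Derive_surj K : K < 0 -> exists u, 0 < u /\ f u / Derive f u = K.
Proof.
  intros HK. destruct (sh_over_Derive_near_0 (- K) ltac:(lra)) as [d [Hd Hnear]].
  destruct (sh_over_Derive_large (- K)) as [M [HM Hfar]].
  destruct (exists_above M d) as [s [HMs Hds]].
  destruct (IVT_strict (fun u => f u / Derive f u) (d / 2) s K ltac:(lra)) as [c [Hc Hfc]].
  - intros x Hx. apply continuity_pt_over_Derive; [lra| apply sh_continuous; lra].
  - destruct (Hnear (d / 2) ltac:(lra)) as [Hn _]. specialize (Hfar s HMs).
    pose proof (sh_Derive_neg (d / 2) ltac:(lra)). pose proof (sh_Derive_neg s ltac:(lra)).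
    assert (K < f (d / 2) / Derive f (d / 2)) by (apply Rlt_div_r_neg; lra).
    assert (f s / Derive f s < K) by (apply Rlt_div_l_neg; lra).
    cbv beta. nra.
  - exists c. split; [lra| exact Hfc].
Qed.

Lemma normalized_increment_0 u : normalized_increment f u 0 = 0.
Proof. unfold normalized_increment. rewrite Rplus_0_r, Rminus_diag. apply Rdiv_0_l. Qed.

Lemma normalized_increment_lt_id u t : 0 < u -> 0 < u + t -> t <> 0 -> normalized_increment f u t < t.
Proof.
  intros Hu Hut Ht. pose proof (sh_tangent_lt u (u + t) Hu Hut ltac:(lra)) as Htan.
  pose proof (sh_Derive_neg u Hu). unfold normalized_increment.
  apply Rlt_div_l_neg; [lra|]. replace (u + t - u) with t in Htan by ring. lra.
Qed.

Lemma normalized_increment_sign u t : 0 < u -> 0 < u + t -> t <> 0 ->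
  0 < t * normalized_increment f u t.
Proof.
  intros Hu Hut Ht. pose proof (sh_Derive_neg u Hu). unfold normalized_increment.
  destruct (Rlt_or_le 0 t) as [Hp|Hn].
  - pose proof (sh_decr u (u + t) Hu ltac:(lra)).
    apply Rmult_lt_0_compat; [lra| apply Rdiv_neg_neg; lra].
  - pose proof (sh_decr (u + t) u Hut ltac:(lra)).
    replace (t * ((f (u + t) - f u) / Derive f u)) with ((- t) * ((f (u + t) - f u) / - Derive f u))
      by (field; lra).
    apply Rmult_lt_0_compat; [lra| apply Rdiv_lt_0_compat; lra].
Qed.

Lemma normalized_increment_is_derive u t : 0 < u + t ->
  is_derive (normalized_increment f u) t (Derive f (u + t) / Derive f u).
Proof.
  intros Hut. unfold normalized_increment. auto_derive; [apply sh_ex_derive, Hut|].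
  change (fun x => f x) with f. unfold Rdiv. ring.
Qed.

Lemma normalized_increment_gap_decr u u' t1 t2 : 0 < u -> u < u' -> 0 <= t1 -> t1 < t2 ->
  normalized_increment f u t2 - normalized_increment f u' t2
  < normalized_increment f u t1 - normalized_increment f u' t1.
Proof.
  intros Hu Huu Ht1 Ht12.
  apply (decr_on_segment (fun t => normalized_increment f u t - normalized_increment f u' t)
    (fun t => Derive f (u + t) / Derive f u - Derive f (u' + t) / Derive f u') t1 t2 Ht12).
  - intros t Ht. apply (is_derive_minus (normalized_increment f u) (normalized_increment f u'));
      apply normalized_increment_is_derive; lra.
  - intros t Ht. pose proof (sh_Derive_ratio_incr u u' t Hu Huu ltac:(lra)). lra.
Qed.

Lemma normalized_increment_gap_incr u u' t1 t2 : 0 < u -> u < u' -> 0 < u + t1 -> t1 < t2 -> t2 <= 0 ->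
  normalized_increment f u t1 - normalized_increment f u' t1
  < normalized_increment f u t2 - normalized_increment f u' t2.
Proof.
  intros Hu Huu Ht1 Ht12 Ht2.
  apply (incr_on_segment (fun t => normalized_increment f u t - normalized_increment f u' t)
    (fun t => Derive f (u + t) / Derive f u - Derive f (u' + t) / Derive f u') t1 t2 Ht12).
  - intros t Ht. apply (is_derive_minus (normalized_increment f u) (normalized_increment f u'));
      apply normalized_increment_is_derive; lra.
  - intros t Ht.
    pose proof (sh_Derive_ratio_incr (u + t) (u' + t) (- t) ltac:(lra) ltac:(lra) ltac:(lra)) as Hr.
    replace (u + t + - t) with u in Hr by ring. replace (u' + t + - t) with u' in Hr by ring.
    pose proof (sh_Derive_neg u Hu). pose proof (sh_Derive_neg u' ltac:(lra)).
    pose proof (sh_Derive_neg (u + t) ltac:(lra)). pose proof (sh_Derive_neg (u' + t) ltac:(lra)).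
    replace (Derive f (u + t) / Derive f u) with (/ (Derive f u / Derive f (u + t))) by (field; lra).
    replace (Derive f (u' + t) / Derive f u') with (/ (Derive f u' / Derive f (u' + t))) by (field; lra).
    apply Rlt_0_minus, Rinv_lt_contravar; [|exact Hr].
    apply Rmult_lt_0_compat; apply Rdiv_neg_neg; lra.
Qed.

Lemma normalized_increment_lt u u' t : 0 < u -> u < u' -> 0 < u + t -> t <> 0 ->
  normalized_increment f u t < normalized_increment f u' t.
Proof.
  intros Hu Huu Hut Ht. destruct (Rlt_or_le 0 t) as [Hp|Hn].
  - pose proof (normalized_increment_gap_decr u u' 0 t Hu Huu ltac:(lra) Hp) as Hgap.
    rewrite !normalized_increment_0 in Hgap. lra.
  - pose proof (normalized_increment_gap_incr u u' t 0 Hu Huu Hut ltac:(lra) ltac:(lra)) as Hgap.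
    rewrite !normalized_increment_0 in Hgap. lra.
Qed.

(* Let t -> +oo in normalized_increment_gap_decr. *)
Lemma sh_over_Derive_decr u u' : 0 < u -> u < u' -> f u' / Derive f u' < f u / Derive f u.
Proof.
  intros Hu Huu.
  set (gap := fun t => normalized_increment f u t - normalized_increment f u' t).
  assert (Hg1 : gap 1 < 0).
  { pose proof (normalized_increment_lt u u' 1 Hu Huu ltac:(lra) ltac:(lra)). unfold gap. lra. }
  pose proof (sh_Derive_neg u Hu). pose proof (sh_Derive_neg u' ltac:(lra)).
  destruct (sh_small_near_infty (gap 1 * Derive f u) ltac:(nra)) as [M HM].
  destruct (exists_above (M - u) 1) as [t [HMt Ht1]].
  pose proof (normalized_increment_gap_decr u u' 1 t Hu Huu ltac:(lra) Ht1) as Hgt.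
  fold (gap t) (gap 1) in Hgt.
  specialize (HM (u + t) ltac:(lra)).
  assert (gap 1 < f (u + t) / Derive f u) by (apply Rlt_div_r_neg; lra).
  assert (f (u' + t) / Derive f u' < 0) by (apply Rdiv_pos_neg; [apply sh_pos; lra| lra]).
  assert (E : gap t = f (u + t) / Derive f u - f (u' + t) / Derive f u'
    + (f u' / Derive f u' - f u / Derive f u)).
  { unfold gap, normalized_increment. field. lra. }
  lra.
Qed.

Lemma normalized_increment_below X Z : Z < X -> X < 0 \/ 0 < Z ->
  exists a, 0 < a /\ 0 < a + X /\ normalized_increment f a X < Z.
Proof.
  intros HZX [HX|HZ].
  - destruct (sh_large_near_0 (f (- X) + Z * Derive f (- X))) as [d [Hd Hlarge]].
    exists (- X + d / 2). split; [lra|]. split; [lra|].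
    set (a := - X + d / 2).
    pose proof (sh_Derive_neg (- X) ltac:(lra)). pose proof (sh_Derive_neg a ltac:(unfold a; lra)).
    pose proof (sh_Derive_incr (- X) a ltac:(lra) ltac:(unfold a; lra)).
    pose proof (sh_decr (- X) a ltac:(lra) ltac:(unfold a; lra)).
    specialize (Hlarge (a + X) ltac:(unfold a; lra)).
    unfold normalized_increment. apply Rlt_div_l_neg; [lra|].
    assert (Z * Derive f a < Z * Derive f (- X)) by (apply Rmult_lt_gt_compat_neg_l; lra).
    lra.
  - destruct (sh_over_Derive_near_0 Z HZ) as [d [Hd Hnear]].
    exists (d / 2). split; [lra|]. split; [lra|].
    destruct (Hnear (d / 2) ltac:(lra)) as [Hn _].
    pose proof (sh_pos (d / 2 + X) ltac:(lra)). pose proof (sh_Derive_neg (d / 2) ltac:(lra)).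
    unfold normalized_increment. apply Rlt_div_l_neg; lra.
Qed.

Lemma normalized_increment_attains X Z : Z < X -> X < 0 \/ 0 < Z ->
  exists u, 0 < u /\ 0 < u + X /\ normalized_increment f u X = Z.
Proof.
  intros HZX Hcase.
  destruct (normalized_increment_below X Z HZX Hcase) as [a [Ha [HaX Hlt]]].
  destruct (normalized_increment_lim X (X - Z) ltac:(lra)) as [M [HM Hfar]].
  destruct (exists_above M a) as [b [HMb Hab]].
  destruct (Hfar b HMb) as [_ Hb]. apply Rabs_lt_between in Hb.
  destruct (IVT_strict (fun u => normalized_increment f u X) a b Z Hab) as [c [Hc Hfc]].
  - intros u Hu. unfold normalized_increment. apply continuity_pt_over_Derive; [lra|].
    apply continuity_pt_minus; [| apply sh_continuous; lra].
    apply (continuity_pt_comp (fun u => u + X) f).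
    + apply continuity_pt_plus; [apply continuity_pt_id| apply continuity_pt_const; now intros ? ?].
    + apply sh_continuous. lra.
  - cbv beta. nra.
  - exists c. split; [lra|]. split; [lra| exact Hfc].
Qed.

End StronglyHyperbolic.

Lemma two_branch_quotient_attains f g X Z : strongly_hyperbolic f -> strongly_hyperbolic g ->
  0 < X -> Z < 0 -> exists u, 0 < u < X /\ (g (X - u) + f u) / Derive f u = Z.
Proof.
  intros Hf Hg HX HZ.
  set (B := g (X / 2)). assert (HB : 0 < B) by (apply sh_pos; auto; lra).
  set (eps := - Z / (B + 1)).
  assert (Heps : 0 < eps) by (unfold eps; apply Rdiv_lt_0_compat; lra).
  assert (Heps' : eps * (B + 1) = - Z) by (unfold eps; field; lra).
  destruct (sh_over_Derive_near_0 f Hf eps Heps) as [d [Hd Hnear]].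
  destruct (exists_pos_below d (X / 2) Hd ltac:(lra)) as [a [Ha [Had HaX]]].
  destruct (Hnear a ltac:(lra)) as [Hn1 Hn2].
  pose proof (sh_Derive_neg f Hf a Ha).
  assert (Hga : g (X - a) < B) by (apply sh_decr; auto; lra).
  assert (Hlo : Z < (g (X - a) + f a) / Derive f a).
  { pose proof (sh_pos g Hg (X - a) ltac:(lra)). apply Rlt_div_r_neg; [lra|]. nra. }
  destruct (sh_large_near_0 g Hg (Z * Derive f a)) as [d' [Hd' Hlarge]].
  destruct (exists_pos_below d' (X - a) Hd' ltac:(lra)) as [h [Hh [Hhd HhX]]].
  assert (Hhi : (g (X - (X - h)) + f (X - h)) / Derive f (X - h) < Z).
  { pose proof (sh_Derive_neg f Hf (X - h) ltac:(lra)).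
    pose proof (sh_Derive_incr f Hf a (X - h) Ha ltac:(lra)).
    pose proof (sh_pos f Hf (X - h) ltac:(lra)).
    specialize (Hlarge h ltac:(lra)). replace (X - (X - h)) with h by ring.
    apply Rlt_div_l_neg; nra. }
  destruct (IVT_strict (fun u => (g (X - u) + f u) / Derive f u) a (X - h) Z ltac:(lra))
    as [c [Hc Hfc]].
  - intros u Hu. apply (continuity_pt_over_Derive f Hf); [lra|].
    apply continuity_pt_plus; [| apply sh_continuous; auto; lra].
    apply (continuity_pt_comp (fun u => X - u) g).
    + apply continuity_pt_minus; [apply continuity_pt_const; now intros ? ?| apply continuity_pt_id].
    + apply sh_continuous; auto; lra.
  - cbv beta. nra.
  - exists c. split; [lra| exact Hfc].
Qed.

(** * The curves of C^-(f1, f2) and the point reflection *)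

Definition opp_point (z : P) : P := (option_map Ropp (fst z), option_map Ropp (snd z)).

Lemma opp_point_involutive z : opp_point (opp_point z) = z.
Proof. destruct z as [[x|] [y|]]; unfold opp_point; simpl; rewrite ?Ropp_involutive; reflexivity. Qed.

Lemma fabc_right f1 f2 a b c x : - b < x -> fabc f1 f2 a b c x = a * f1 (x + b) + c.
Proof. intros H. unfold fabc. destruct (Rlt_dec (- b) x); [reflexivity| lra]. Qed.

Lemma fabc_left f1 f2 a b c x : x < - b -> fabc f1 f2 a b c x = - a * f2 (- x - b) + c.
Proof. intros H. unfold fabc. destruct (Rlt_dec (- b) x); [lra| reflexivity]. Qed.

Lemma fabc_opp f1 f2 a b c x : x <> - b -> fabc f1 f2 a b c x = - fabc f2 f1 a (- b) (- c) (- x).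
Proof.
  intros Hx. destruct (Rlt_or_le (- b) x) as [Hr|Hl].
  - rewrite fabc_right, fabc_left by lra. replace (- - x - - b) with (x + b) by ring. ring.
  - rewrite fabc_left, fabc_right by lra. replace (- x + - b) with (- x - b) by ring. ring.
Qed.

Lemma fbar_intro f1 f2 a b c x y :
  x <> - b -> fabc f1 f2 a b c x = y -> fbar f1 f2 a b c (Some x, Some y).
Proof. intros Hx <-. left. exists x. split; [exact Hx| reflexivity]. Qed.

Lemma fbar_opp_point f1 f2 a b c z :
  fbar f1 f2 a b c z -> fbar f2 f1 a (- b) (- c) (opp_point z).
Proof.
  intros [[x [Hx ->]]|[-> | ->]]; unfold opp_point; simpl.
  - apply fbar_intro; [lra|]. rewrite (fabc_opp f1 f2 a b c x Hx). ring.
  - right; left. rewrite Ropp_involutive. reflexivity.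
  - right; right. reflexivity.
Qed.

Lemma fbar_opp f1 f2 a b c z : fbar f1 f2 a b c z <-> fbar f2 f1 a (- b) (- c) (opp_point z).
Proof.
  split; [apply fbar_opp_point|]. intros H.
  apply fbar_opp_point in H. rewrite opp_point_involutive, !Ropp_involutive in H. exact H.
Qed.

Lemma lbar_opp s t z : lbar s t z <-> lbar s (- t) (opp_point z).
Proof.
  split.
  - intros [[x ->]| ->]; unfold opp_point; simpl.
    + left. exists (- x). do 2 f_equal. ring.
    + right. reflexivity.
  - destruct z as [[x|] [y|]]; unfold opp_point; simpl; intros [[x' E]| E]; try discriminate.
    + injection E; intros Hy <-. left. exists x. do 2 f_equal. nra.
    + right. reflexivity.
Qed.

Lemma fbar_meet f1 f2 a b c a' b' c' x0 y0 z : b <> b' -> c <> c' -> fabc f1 f2 a b c x0 = y0 ->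
  (forall x, x <> - b -> x <> - b' -> x <> x0 -> fabc f1 f2 a b c x <> fabc f1 f2 a' b' c' x) ->
  fbar f1 f2 a b c z -> fbar f1 f2 a' b' c' z -> z = (Some x0, Some y0).
Proof.
  intros Hb Hc Hy Hx [[x [Hxb ->]]|[-> | ->]] [[x' [Hxb' E]]|[E|E]]; try discriminate.
  - injection E as <- E. destruct (Req_dec x x0) as [->|Hne]; [rewrite Hy; reflexivity|].
    exfalso. exact (Hx x Hxb Hxb' Hne E).
  - injection E as E. exfalso. apply Hb. lra.
  - injection E as E. exfalso. exact (Hc E).
Qed.

Lemma fbar_lbar_meet f1 f2 a b c s t x0 y0 z : fabc f1 f2 a b c x0 = y0 ->
  (forall x, x <> - b -> x <> x0 -> fabc f1 f2 a b c x <> s * x + t) ->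
  fbar f1 f2 a b c z -> lbar s t z -> z = (Some x0, Some y0).
Proof.
  intros Hy Hx Hz [[x' E]| E]; destruct Hz as [[x [Hxb ->]]|[-> | ->]]; try discriminate.
  injection E; intros E1 <-. destruct (Req_dec x x0) as [->|Hne]; [rewrite Hy; reflexivity|].
  exfalso. exact (Hx x Hxb Hne E1).
Qed.

(* The curve through (x0, y0) with slope m there, this point lying on its right branch
   at distance u from the vertical asymptote; tangent_left is its mirror image. *)
Definition tangent_right (f1 f2 : R -> R) (x0 y0 m u : R) : P -> Prop :=
  fbar f1 f2 (m / Derive f1 u) (u - x0) (y0 - m * (f1 u / Derive f1 u)).

Definition tangent_left (f1 f2 : R -> R) (x0 y0 m v : R) : P -> Prop :=
  fbar f1 f2 (m / Derive f2 v) (- x0 - v) (y0 + m * (f2 v / Derive f2 v)).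

Definition tangent_line (x0 y0 m : R) : P -> Prop := lbar m (y0 - m * x0).

Lemma tangent_left_opp f1 f2 x0 y0 m v z :
  tangent_left f1 f2 x0 y0 m v z <-> tangent_right f2 f1 (- x0) (- y0) m v (opp_point z).
Proof.
  unfold tangent_left, tangent_right. rewrite fbar_opp.
  replace (- (- x0 - v)) with (v - - x0) by ring.
  replace (- (y0 + m * (f2 v / Derive f2 v))) with (- y0 - m * (f2 v / Derive f2 v)) by ring.
  reflexivity.
Qed.

Lemma tangent_line_opp x0 y0 m z : tangent_line x0 y0 m z <-> tangent_line (- x0) (- y0) m (opp_point z).
Proof.
  unfold tangent_line. rewrite lbar_opp.
  replace (- (y0 - m * x0)) with (- y0 - m * - x0) by ring. reflexivity.
Qed.

Lemma tangent_left_value f1 f2 x0 y0 m v x : x <> x0 + v ->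
  fabc f1 f2 (m / Derive f2 v) (- x0 - v) (y0 + m * (f2 v / Derive f2 v)) x
  = - fabc f2 f1 (m / Derive f2 v) (v - - x0) (- y0 - m * (f2 v / Derive f2 v)) (- x).
Proof.
  intros Hx. rewrite fabc_opp by lra. do 2 f_equal; ring.
Qed.

(** * The pencil of curves tangent at a finite point *)

Section TangentRight.

Variables (f1 f2 : R -> R) (x0 y0 m u : R).
Hypotheses (H1 : strongly_hyperbolic f1) (H2 : strongly_hyperbolic f2) (Hm : m < 0) (Hu : 0 < u).

Local Notation value x :=
  (fabc f1 f2 (m / Derive f1 u) (u - x0) (y0 - m * (f1 u / Derive f1 u)) x).

Lemma tangent_right_a_pos : 0 < m / Derive f1 u.
Proof. apply Rdiv_neg_neg; [exact Hm| apply sh_Derive_neg; assumption]. Qed.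

Lemma tangent_right_c_lt : y0 - m * (f1 u / Derive f1 u) < y0.
Proof.
  assert (f1 u / Derive f1 u < 0)
    by (apply Rdiv_pos_neg; [apply sh_pos| apply sh_Derive_neg]; assumption).
  nra.
Qed.

Lemma tangent_right_value_right x : x0 - u < x ->
  value x = y0 + m * normalized_increment f1 u (x - x0).
Proof.
  intros Hx. pose proof (sh_Derive_neg f1 H1 u Hu).
  rewrite fabc_right by lra. unfold normalized_increment.
  replace (x + (u - x0)) with (u + (x - x0)) by ring. field. lra.
Qed.

Lemma tangent_right_value_left x : x < x0 - u -> value x < y0 - m * (f1 u / Derive f1 u).
Proof.
  intros Hx. rewrite fabc_left by lra.
  pose proof tangent_right_a_pos. pose proof (sh_pos f2 H2 (- x - (u - x0)) ltac:(lra)). nra.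
Qed.

Lemma tangent_right_value_at : value x0 = y0.
Proof. rewrite tangent_right_value_right by lra. rewrite Rminus_diag, normalized_increment_0. ring. Qed.

Lemma tangent_right_at_point : tangent_right f1 f2 x0 y0 m u (Some x0, Some y0).
Proof. apply fbar_intro; [lra| exact tangent_right_value_at]. Qed.

Lemma tangent_right_above_line x : x0 - u < x -> x <> x0 -> y0 + m * (x - x0) < value x.
Proof.
  intros Hx Hne. rewrite tangent_right_value_right by exact Hx.
  pose proof (normalized_increment_lt_id f1 H1 u (x - x0) Hu ltac:(lra) ltac:(lra)). nra.
Qed.

Lemma tangent_right_value_sign x : x0 - u < x -> x <> x0 -> (x - x0) * (value x - y0) < 0.
Proof.
  intros Hx Hne. rewrite tangent_right_value_right by exact Hx.
  pose proof (normalized_increment_sign f1 H1 u (x - x0) Hu ltac:(lra) ltac:(lra)). nra.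
Qed.

Lemma tangent_right_line_meet z :
  tangent_right f1 f2 x0 y0 m u z -> tangent_line x0 y0 m z -> z = (Some x0, Some y0).
Proof.
  intros Hz Hl. apply (fbar_lbar_meet f1 f2 _ _ _ m (y0 - m * x0) x0 y0 z tangent_right_value_at);
    [| exact Hz| exact Hl].
  intros x Hb Hx0. destruct (Rlt_or_le (x0 - u) x) as [Hr|Hl'].
  - pose proof (tangent_right_above_line x Hr Hx0). lra.
  - pose proof (tangent_right_value_left x ltac:(lra)). pose proof tangent_right_c_lt. nra.
Qed.

End TangentRight.

Section TwoTangentRights.

Variables (f1 f2 : R -> R) (x0 y0 m u u' : R).
Hypotheses (H1 : strongly_hyperbolic f1) (H2 : strongly_hyperbolic f2) (Hm : m < 0)
  (Hu : 0 < u) (Huu : u < u').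

Local Notation value w x :=
  (fabc f1 f2 (m / Derive f1 w) (w - x0) (y0 - m * (f1 w / Derive f1 w)) x).

Lemma tangent_rights_value_lt x : x0 - u < x -> x <> x0 -> value u' x < value u x.
Proof.
  intros Hx Hne. rewrite !tangent_right_value_right by (auto; lra).
  pose proof (normalized_increment_lt f1 H1 u u' (x - x0) Hu Huu ltac:(lra) ltac:(lra)). nra.
Qed.

Lemma tangent_rights_a_lt : m / Derive f1 u < m / Derive f1 u'.
Proof.
  pose proof (sh_Derive_neg f1 H1 u' ltac:(lra)).
  pose proof (sh_Derive_incr f1 H1 u u' Hu Huu).
  unfold Rdiv. apply Rmult_lt_gt_compat_neg_l; [exact Hm|].
  apply Rinv_lt_0_contravar; assumption.
Qed.

Lemma tangent_rights_meet z : tangent_right f1 f2 x0 y0 m u z -> tangent_right f1 f2 x0 y0 m u' z ->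
  z = (Some x0, Some y0).
Proof.
  assert (Hc : m * (f1 u / Derive f1 u) < m * (f1 u' / Derive f1 u'))
    by (apply Rmult_lt_gt_compat_neg_l; [exact Hm| apply sh_over_Derive_decr; assumption]).
  unfold tangent_right. apply fbar_meet; [lra| lra| apply tangent_right_value_at; auto|].
  intros x Hb Hb' Hx0.
  destruct (Rtotal_order x (x0 - u)) as [Hl|[E|Hr]];
    [| exfalso; apply Hb; lra| apply Rgt_not_eq, tangent_rights_value_lt; assumption].
  destruct (Rtotal_order x (x0 - u')) as [Hl'|[E|Hmid]]; [| exfalso; apply Hb'; lra|].
  - apply Rgt_not_eq. rewrite !fabc_left by lra.
    pose proof tangent_rights_a_lt. pose proof (tangent_right_a_pos f1 m u H1 Hm Hu).
    pose proof (sh_decr f2 H2 (- x - (u' - x0)) (- x - (u - x0)) ltac:(lra) ltac:(lra)).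
    pose proof (sh_pos f2 H2 (- x - (u - x0)) ltac:(lra)).
    assert (m / Derive f1 u * f2 (- x - (u - x0)) < m / Derive f1 u * f2 (- x - (u' - x0)))
      by (apply Rmult_lt_compat_l; assumption).
    assert (m / Derive f1 u * f2 (- x - (u' - x0)) < m / Derive f1 u' * f2 (- x - (u' - x0)))
      by (apply Rmult_lt_compat_r; lra).
    lra.
  - apply Rlt_not_eq.
    pose proof (tangent_right_value_left f1 f2 x0 y0 m u H1 H2 Hm Hu x Hl).
    pose proof (tangent_right_c_lt f1 y0 m u H1 Hm Hu).
    pose proof (tangent_right_value_sign f1 f2 x0 y0 m u' H1 Hm ltac:(lra) x Hmid Hx0). nra.
Qed.

End TwoTangentRights.

Lemma opp_point_eq_opp z x0 y0 : opp_point z = (Some (- x0), Some (- y0)) -> z = (Some x0, Some y0).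
Proof.
  intros E. rewrite <- (opp_point_involutive z), E. unfold opp_point. simpl.
  rewrite !Ropp_involutive. reflexivity.
Qed.

Lemma tangent_lefts_meet f1 f2 x0 y0 m v v' z : strongly_hyperbolic f1 -> strongly_hyperbolic f2 ->
  m < 0 -> 0 < v -> v < v' ->
  tangent_left f1 f2 x0 y0 m v z -> tangent_left f1 f2 x0 y0 m v' z -> z = (Some x0, Some y0).
Proof.
  intros H1 H2 Hm Hv Hvv. rewrite !tangent_left_opp. intros Hz Hz'.
  apply opp_point_eq_opp. exact (tangent_rights_meet f2 f1 _ _ m v v' H2 H1 Hm Hv Hvv _ Hz Hz').
Qed.

Lemma tangent_left_line_meet f1 f2 x0 y0 m v z : strongly_hyperbolic f1 -> strongly_hyperbolic f2 ->
  m < 0 -> 0 < v -> tangent_left f1 f2 x0 y0 m v z -> tangent_line x0 y0 m z -> z = (Some x0, Some y0).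
Proof.
  intros H1 H2 Hm Hv. rewrite tangent_left_opp, tangent_line_opp. intros Hz Hl.
  apply opp_point_eq_opp. exact (tangent_right_line_meet f2 f1 _ _ m v H2 H1 Hm Hv _ Hz Hl).
Qed.

Lemma tangent_right_left_meet f1 f2 x0 y0 m u v z : strongly_hyperbolic f1 -> strongly_hyperbolic f2 ->
  m < 0 -> 0 < u -> 0 < v ->
  tangent_right f1 f2 x0 y0 m u z -> tangent_left f1 f2 x0 y0 m v z -> z = (Some x0, Some y0).
Proof.
  intros H1 H2 Hm Hu Hv.
  pose proof (tangent_right_c_lt f1 y0 m u H1 Hm Hu).
  pose proof (tangent_right_c_lt f2 (- y0) m v H2 Hm Hv).
  unfold tangent_right, tangent_left. apply fbar_meet; [lra| lra| apply tangent_right_value_at; auto|].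
  intros x Hb Hb' Hx0. rewrite tangent_left_value by lra.
  destruct (Rlt_or_le (x0 + v) x) as [Hfar|Hnear].
  - pose proof (tangent_right_value_sign f1 f2 x0 y0 m u H1 Hm Hu x ltac:(lra) Hx0).
    pose proof (tangent_right_value_left f2 f1 (- x0) (- y0) m v H2 H1 Hm Hv (- x) ltac:(lra)). nra.
  - destruct (Rlt_or_le (x0 - u) x) as [Hmid|Hleft].
    + pose proof (tangent_right_above_line f1 f2 x0 y0 m u H1 Hm Hu x Hmid Hx0).
      pose proof (tangent_right_above_line f2 f1 (- x0) (- y0) m v H2 Hm Hv (- x) ltac:(lra) ltac:(lra)).
      lra.
    + pose proof (tangent_right_value_left f1 f2 x0 y0 m u H1 H2 Hm Hu x ltac:(lra)).
      pose proof (tangent_right_value_sign f2 f1 (- x0) (- y0) m v H2 Hm Hv (- x) ltac:(lra) ltac:(lra)).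
      nra.
Qed.

(* The points swept by tangent_right f1 f2 x0 y0 m u, u > 0. *)
Definition right_reachable (x0 y0 m : R) (q : P) : Prop :=
  match q with
  | (Some x1, Some y1) =>
      (x1 < x0 /\ (m * (x1 - x0) < y1 - y0 \/ y1 < y0)) \/ (x0 < x1 /\ m * (x1 - x0) < y1 - y0 < 0)
  | (Some x1, None) => x1 < x0
  | (None, Some y1) => y1 < y0
  | (None, None) => False
  end.

Lemma right_reachable_cases x0 y0 m q : ~ parallel (Some x0, Some y0) q ->
  tangent_line x0 y0 m q \/ right_reachable x0 y0 m q \/ right_reachable (- x0) (- y0) m (opp_point q).
Proof.
  unfold parallel, tangent_line. intros Hpar.
  destruct q as [[x1|] [y1|]]; unfold opp_point; simpl in *.
  - assert (x1 <> x0) by (intros ->; apply Hpar; left; reflexivity).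
    assert (y1 <> y0) by (intros ->; apply Hpar; right; reflexivity).
    destruct (Req_dec (y1 - y0) (m * (x1 - x0))) as [E|E].
    + left. left. exists x1. do 2 f_equal. lra.
    + right. lra.
  - assert (x1 <> x0) by (intros ->; apply Hpar; left; reflexivity). right. lra.
  - assert (y1 <> y0) by (intros ->; apply Hpar; right; reflexivity). right. lra.
  - left. right. reflexivity.
Qed.

Lemma tangent_right_reachable f1 f2 x0 y0 m q :
  strongly_hyperbolic f1 -> strongly_hyperbolic f2 -> m < 0 -> right_reachable x0 y0 m q ->
  exists u, 0 < u /\ tangent_right f1 f2 x0 y0 m u q.
Proof.
  intros H1 H2 Hm. destruct q as [[x1|] [y1|]]; simpl; intros Hq; [| | |contradiction].
  - assert (Hright : forall u, 0 < u -> 0 < u + (x1 - x0) ->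
      normalized_increment f1 u (x1 - x0) = (y1 - y0) / m ->
      tangent_right f1 f2 x0 y0 m u (Some x1, Some y1)).
    { intros u Hu HuX E. apply fbar_intro; [lra|].
      rewrite (tangent_right_value_right f1 f2 x0 y0 m u H1 Hu x1) by lra. rewrite E. field. lra. }
    destruct Hq as [[Hx [Hy|Hy]]|[Hx Hy]].
    + destruct (normalized_increment_attains f1 H1 (x1 - x0) ((y1 - y0) / m)
        ltac:(apply Rlt_div_l_neg; lra) ltac:(left; lra)) as [u [Hu [HuX E]]].
      exists u. split; [exact Hu| apply Hright; assumption].
    + destruct (two_branch_quotient_attains f1 f2 (x0 - x1) ((y0 - y1) / m) H1 H2 ltac:(lra)
        ltac:(apply Rdiv_pos_neg; lra)) as [u [[Hu HuX] E]].
      exists u. split; [exact Hu|]. apply fbar_intro; [lra|].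
      pose proof (sh_Derive_neg f1 H1 u Hu).
      rewrite fabc_left by lra. replace (- x1 - (u - x0)) with (x0 - x1 - u) by ring.
      replace (- (m / Derive f1 u) * f2 (x0 - x1 - u) + (y0 - m * (f1 u / Derive f1 u)))
        with (y0 - m * ((f2 (x0 - x1 - u) + f1 u) / Derive f1 u)) by (field; lra).
      rewrite E. field. lra.
    + destruct (normalized_increment_attains f1 H1 (x1 - x0) ((y1 - y0) / m)
        ltac:(apply Rlt_div_l_neg; lra) ltac:(right; apply Rdiv_neg_neg; lra)) as [u [Hu [HuX E]]].
      exists u. split; [exact Hu| apply Hright; assumption].
  - exists (x0 - x1). split; [lra|]. right; left. do 2 f_equal. ring.
  - destruct (sh_over_Derive_surj f1 H1 ((y0 - y1) / m) ltac:(apply Rdiv_pos_neg; lra)) as [u [Hu E]].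
    exists u. split; [exact Hu|]. right; right. rewrite E. do 2 f_equal. field. lra.
Qed.

Definition in_pencil (f1 f2 : R -> R) (x0 y0 m : R) (D : P -> Prop) : Prop :=
  (exists u, 0 < u /\ D = tangent_right f1 f2 x0 y0 m u) \/
  (exists v, 0 < v /\ D = tangent_left f1 f2 x0 y0 m v) \/
  D = tangent_line x0 y0 m.

Section Pencil.

Variables (f1 f2 : R -> R) (x0 y0 m : R).
Hypotheses (H1 : strongly_hyperbolic f1) (H2 : strongly_hyperbolic f2) (Hm : m < 0).

Lemma in_pencil_at_point D : in_pencil f1 f2 x0 y0 m D -> D (Some x0, Some y0).
Proof.
  intros [[u [Hu ->]]|[[v [Hv ->]]| ->]].
  - apply tangent_right_at_point; assumption.
  - apply tangent_left_opp. apply tangent_right_at_point; assumption.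
  - left. exists x0. do 2 f_equal. ring.
Qed.

Lemma in_pencil_Cminus D : in_pencil f1 f2 x0 y0 m D -> in_Cminus f1 f2 D.
Proof.
  intros [[u [Hu ->]]|[[v [Hv ->]]| ->]].
  - left. exists (m / Derive f1 u), (u - x0), (y0 - m * (f1 u / Derive f1 u)).
    split; [apply tangent_right_a_pos; assumption| reflexivity].
  - left. exists (m / Derive f2 v), (- x0 - v), (y0 + m * (f2 v / Derive f2 v)).
    split; [apply tangent_right_a_pos; assumption| reflexivity].
  - right. exists m, (y0 - m * x0). split; [exact Hm| reflexivity].
Qed.

Lemma pencil_meet C D z : in_pencil f1 f2 x0 y0 m C -> in_pencil f1 f2 x0 y0 m D -> C <> D ->
  C z -> D z -> z = (Some x0, Some y0).
Proof.
  intros [[u [Hu ->]]|[[v [Hv ->]]| ->]] [[u' [Hu' ->]]|[[v' [Hv' ->]]| ->]] HCD Hz Hz'.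
  - destruct (Rtotal_order u u') as [Hlt|[<-|Hgt]]; [| contradiction|].
    + exact (tangent_rights_meet f1 f2 x0 y0 m u u' H1 H2 Hm Hu Hlt z Hz Hz').
    + exact (tangent_rights_meet f1 f2 x0 y0 m u' u H1 H2 Hm Hu' Hgt z Hz' Hz).
  - exact (tangent_right_left_meet f1 f2 x0 y0 m u v' z H1 H2 Hm Hu Hv' Hz Hz').
  - exact (tangent_right_line_meet f1 f2 x0 y0 m u H1 H2 Hm Hu z Hz Hz').
  - exact (tangent_right_left_meet f1 f2 x0 y0 m u' v z H1 H2 Hm Hu' Hv Hz' Hz).
  - destruct (Rtotal_order v v') as [Hlt|[<-|Hgt]]; [| contradiction|].
    + exact (tangent_lefts_meet f1 f2 x0 y0 m v v' z H1 H2 Hm Hv Hlt Hz Hz').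
    + exact (tangent_lefts_meet f1 f2 x0 y0 m v' v z H1 H2 Hm Hv' Hgt Hz' Hz).
  - exact (tangent_left_line_meet f1 f2 x0 y0 m v z H1 H2 Hm Hv Hz Hz').
  - exact (tangent_right_line_meet f1 f2 x0 y0 m u' H1 H2 Hm Hu' z Hz' Hz).
  - exact (tangent_left_line_meet f1 f2 x0 y0 m v' z H1 H2 Hm Hv' Hz' Hz).
  - contradiction.
Qed.

Lemma pencil_covers q : ~ parallel (Some x0, Some y0) q ->
  exists D, in_pencil f1 f2 x0 y0 m D /\ D q.
Proof.
  intros Hpar. destruct (right_reachable_cases x0 y0 m q Hpar) as [Hl|[Hq|Hq]].
  - exists (tangent_line x0 y0 m). split; [right; right; reflexivity| exact Hl].
  - destruct (tangent_right_reachable f1 f2 x0 y0 m q H1 H2 Hm Hq) as [u [Hu Hqu]].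
    exists (tangent_right f1 f2 x0 y0 m u). split; [left; exists u; auto| exact Hqu].
  - destruct (tangent_right_reachable f2 f1 _ _ m _ H2 H1 Hm Hq) as [v [Hv Hqv]].
    exists (tangent_left f1 f2 x0 y0 m v). split; [right; left; exists v; auto|].
    apply tangent_left_opp. exact Hqv.
Qed.

End Pencil.

Lemma Cminus_in_pencil f1 f2 C x0 y0 : strongly_hyperbolic f1 -> strongly_hyperbolic f2 ->
  in_Cminus f1 f2 C -> C (Some x0, Some y0) -> exists m, m < 0 /\ in_pencil f1 f2 x0 y0 m C.
Proof.
  intros H1 H2 [[a [b [c [Ha ->]]]]|[s [t [Hs ->]]]] Hp.
  - destruct Hp as [[x [Hx E]]|[E|E]]; try discriminate. injection E as <- ->.
    destruct (Rtotal_order x0 (- b)) as [Hl|[He|Hr]]; [| contradiction|].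
    + pose proof (sh_Derive_neg f2 H2 (- x0 - b) ltac:(lra)).
      exists (a * Derive f2 (- x0 - b)). split; [nra|]. right; left. exists (- x0 - b). split; [lra|].
      unfold tangent_left. rewrite fabc_left by lra. f_equal; field; lra.
    + pose proof (sh_Derive_neg f1 H1 (x0 + b) ltac:(lra)).
      exists (a * Derive f1 (x0 + b)). split; [nra|]. left. exists (x0 + b). split; [lra|].
      unfold tangent_right. rewrite fabc_right by lra. f_equal; field; lra.
  - exists s. split; [exact Hs|]. right; right.
    destruct Hp as [[x E]|E]; [|discriminate]. injection E as <- ->.
    unfold tangent_line. f_equal. ring.
Qed.

Definition touching_curve_through (f1 f2 : R -> R) (C : P -> Prop) (p q : P) : Prop :=
  exists D, in_Cminus f1 f2 D /\ D p /\ D q /\ (forall z, C z /\ D z <-> z = p).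

Lemma touching_through_finite f1 f2 C x0 y0 q : strongly_hyperbolic f1 -> strongly_hyperbolic f2 ->
  in_Cminus f1 f2 C -> C (Some x0, Some y0) -> ~ C q -> ~ parallel (Some x0, Some y0) q ->
  touching_curve_through f1 f2 C (Some x0, Some y0) q.
Proof.
  intros H1 H2 HC Cp nCq Hpar.
  destruct (Cminus_in_pencil f1 f2 C x0 y0 H1 H2 HC Cp) as [m [Hm HCm]].
  destruct (pencil_covers f1 f2 x0 y0 m H1 H2 Hm q Hpar) as [D [HD Dq]].
  assert (HCD : C <> D) by (intros ->; contradiction).
  exists D. split; [exact (in_pencil_Cminus f1 f2 x0 y0 m H1 H2 Hm D HD)|].
  split; [exact (in_pencil_at_point f1 f2 x0 y0 m H1 H2 D HD)|]. split; [exact Dq|].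
  intros z. split.
  - intros [Cz Dz]. exact (pencil_meet f1 f2 x0 y0 m H1 H2 Hm C D z HCm HD HCD Cz Dz).
  - intros ->. split; [exact Cp| exact (in_pencil_at_point f1 f2 x0 y0 m H1 H2 D HD)].
Qed.

Lemma fabc_shift_c f1 f2 a b c c' x : fabc f1 f2 a b c' x = fabc f1 f2 a b c x - c + c'.
Proof. unfold fabc. destruct (Rlt_dec (- b) x); ring. Qed.

Lemma vertical_translates_meet f1 f2 a b c c' z : c <> c' ->
  fbar f1 f2 a b c z -> fbar f1 f2 a b c' z -> z = (Some (- b), None).
Proof.
  intros Hc [[x [Hx ->]]|[-> | ->]] [[x' [Hx' E]]|[E|E]]; try discriminate; try reflexivity; exfalso.
  - injection E as <- E. rewrite (fabc_shift_c f1 f2 a b c c' x) in E. lra.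
  - injection E as E. exact (Hc E).
Qed.

Lemma touching_through_vertical_asymptote f1 f2 a b c q : 0 < a ->
  ~ fbar f1 f2 a b c q -> ~ parallel (Some (- b), None) q ->
  touching_curve_through f1 f2 (fbar f1 f2 a b c) (Some (- b), None) q.
Proof.
  intros Ha nCq Hpar. destruct q as [qx [y1|]]; [| exfalso; apply Hpar; right; reflexivity].
  assert (Hex : exists c', c' <> c /\ fbar f1 f2 a b c' (qx, Some y1)).
  { destruct qx as [x1|].
    - assert (Hx1 : x1 <> - b) by (intros ->; apply Hpar; left; reflexivity).
      exists (y1 - fabc f1 f2 a b c x1 + c). split.
      + intros E. apply nCq, fbar_intro; [exact Hx1| lra].
      + apply fbar_intro; [exact Hx1|]. rewrite (fabc_shift_c f1 f2 a b c). ring.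
    - exists y1. split; [intros ->; apply nCq; right; right; reflexivity| right; right; reflexivity]. }
  destruct Hex as [c' [Hc' Dq]].
  exists (fbar f1 f2 a b c'). split; [left; exists a, b, c'; auto|].
  split; [right; left; reflexivity|]. split; [exact Dq|].
  intros z. split.
  - intros [Cz Dz]. exact (vertical_translates_meet f1 f2 a b c c' z (not_eq_sym Hc') Cz Dz).
  - intros ->. split; right; left; reflexivity.
Qed.

Lemma fabc_shift_b f1 f2 a b c x : fabc f1 f2 a b c x = fabc f1 f2 a 0 c (x + b).
Proof.
  unfold fabc. rewrite Ropp_0, Rplus_0_r.
  destruct (Rlt_dec (- b) x); destruct (Rlt_dec 0 (x + b)); try lra.
  replace (- (x + b) - 0) with (- x - b) by ring. reflexivity.
Qed.

Lemma fabc_centered_inj f1 f2 a c s s' : strongly_hyperbolic f1 -> strongly_hyperbolic f2 -> 0 < a ->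
  s <> 0 -> s' <> 0 -> fabc f1 f2 a 0 c s = fabc f1 f2 a 0 c s' -> s = s'.
Proof.
  intros H1 H2 Ha Hs Hs' E.
  assert (Hdecr : forall g, strongly_hyperbolic g -> forall x y, 0 < x -> 0 < y -> g x = g y -> x = y).
  { intros g Hg x y Hx Hy Exy. destruct (Rtotal_order x y) as [Hlt|[Heq|Hgt]]; [| exact Heq|].
    - pose proof (sh_decr g Hg x y Hx Hlt). lra.
    - pose proof (sh_decr g Hg y x Hy Hgt). lra. }
  destruct (Rlt_or_le 0 s); destruct (Rlt_or_le 0 s').
  - rewrite !fabc_right in E by lra. rewrite !Rplus_0_r in E.
    apply (Hdecr f1 H1); [lra| lra| apply (Rmult_eq_reg_l a); lra].
  - rewrite fabc_right, fabc_left in E by lra.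
    pose proof (sh_pos f1 H1 (s + 0) ltac:(lra)). pose proof (sh_pos f2 H2 (- s' - 0) ltac:(lra)). nra.
  - rewrite fabc_left, fabc_right in E by lra.
    pose proof (sh_pos f2 H2 (- s - 0) ltac:(lra)). pose proof (sh_pos f1 H1 (s' + 0) ltac:(lra)). nra.
  - rewrite !fabc_left in E by lra.
    assert (- s - 0 = - s' - 0) by (apply (Hdecr f2 H2); [lra| lra| apply (Rmult_eq_reg_l a); lra]). lra.
Qed.

Lemma horizontal_translates_meet f1 f2 a b b' c z :
  strongly_hyperbolic f1 -> strongly_hyperbolic f2 -> 0 < a -> b <> b' ->
  fbar f1 f2 a b c z -> fbar f1 f2 a b' c z -> z = (None, Some c).
Proof.
  intros H1 H2 Ha Hb [[x [Hx ->]]|[-> | ->]] [[x' [Hx' E]]|[E|E]];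
    try discriminate; try reflexivity; exfalso.
  - injection E as <- E. rewrite (fabc_shift_b f1 f2 a b), (fabc_shift_b f1 f2 a b') in E.
    assert (x + b = x + b') by (apply (fabc_centered_inj f1 f2 a c); auto; lra). lra.
  - injection E as E. apply Hb. lra.
Qed.

Lemma fabc_hits f1 f2 a c x y : strongly_hyperbolic f1 -> strongly_hyperbolic f2 -> 0 < a -> y <> c ->
  exists b, x <> - b /\ fabc f1 f2 a b c x = y.
Proof.
  intros H1 H2 Ha Hy. destruct (Rtotal_order y c) as [Hlt|[Heq|Hgt]]; [| contradiction|].
  - destruct (sh_surj f2 H2 ((c - y) / a) ltac:(apply Rdiv_lt_0_compat; lra)) as [t [Ht Et]].
    exists (- x - t). split; [lra|]. rewrite fabc_left by lra.
    replace (- x - (- x - t)) with t by ring. rewrite Et. field. lra.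
  - destruct (sh_surj f1 H1 ((y - c) / a) ltac:(apply Rdiv_lt_0_compat; lra)) as [t [Ht Et]].
    exists (t - x). split; [lra|]. rewrite fabc_right by lra.
    replace (x + (t - x)) with t by ring. rewrite Et. field. lra.
Qed.

Lemma touching_through_horizontal_asymptote f1 f2 a b c q :
  strongly_hyperbolic f1 -> strongly_hyperbolic f2 -> 0 < a ->
  ~ fbar f1 f2 a b c q -> ~ parallel (None, Some c) q ->
  touching_curve_through f1 f2 (fbar f1 f2 a b c) (None, Some c) q.
Proof.
  intros H1 H2 Ha nCq Hpar. destruct q as [[x1|] qy]; [| exfalso; apply Hpar; left; reflexivity].
  assert (Hex : exists b', b' <> b /\ fbar f1 f2 a b' c (Some x1, qy)).
  { destruct qy as [y1|].
    - assert (Hy1 : y1 <> c) by (intros ->; apply Hpar; right; reflexivity).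
      destruct (fabc_hits f1 f2 a c x1 y1 H1 H2 Ha Hy1) as [b' [Hx1 E]].
      exists b'. split; [intros ->; apply nCq, fbar_intro; assumption| apply fbar_intro; assumption].
    - exists (- x1). split.
      + intros E. apply nCq. right; left. rewrite <- E, Ropp_involutive. reflexivity.
      + right; left. rewrite Ropp_involutive. reflexivity. }
  destruct Hex as [b' [Hb' Dq]].
  exists (fbar f1 f2 a b' c). split; [left; exists a, b', c; auto|].
  split; [right; right; reflexivity|]. split; [exact Dq|].
  intros z. split.
  - intros [Cz Dz]. exact (horizontal_translates_meet f1 f2 a b b' c z H1 H2 Ha (not_eq_sym Hb') Cz Dz).
  - intros ->. split; right; right; reflexivity.
Qed.

Lemma touching_through_line_at_infinity f1 f2 s t q : s < 0 ->
  ~ lbar s t q -> ~ parallel (None, None) q ->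
  touching_curve_through f1 f2 (lbar s t) (None, None) q.
Proof.
  intros Hs nCq Hpar.
  destruct q as [[x1|] [y1|]]; try (exfalso; apply Hpar; (left; reflexivity) || (right; reflexivity)).
  assert (Ht : t <> y1 - s * x1) by (intros E; apply nCq; left; exists x1; do 2 f_equal; lra).
  exists (lbar s (y1 - s * x1)). split; [right; exists s, (y1 - s * x1); auto|].
  split; [right; reflexivity|]. split; [left; exists x1; do 2 f_equal; ring|].
  intros z. split.
  - intros [[[x E]| E] [[x' E']| E']]; subst z; try discriminate; [|reflexivity].
    injection E'; intros. subst x'. exfalso. apply Ht. lra.
  - intros ->. split; right; reflexivity.
Qed.

Theorem theorem4p13 (f1 f2 : R -> R) :
  strongly_hyperbolic f1 -> strongly_hyperbolic f2 ->
  forall (C : P -> Prop) (p q : P),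
    in_Cminus f1 f2 C -> C p -> ~ C q -> ~ parallel p q ->
    exists D : P -> Prop,
      in_Cminus f1 f2 D /\ D p /\ D q /\
      (forall z : P, (C z /\ D z) <-> z = p).
Proof.
  intros H1 H2 C p q HC Cp nCq Hpar.
  destruct p as [[x0|] [y0|]].
  - exact (touching_through_finite f1 f2 C x0 y0 q H1 H2 HC Cp nCq Hpar).
  - destruct HC as [[a [b [c [Ha ->]]]]|[s [t [Hs ->]]]]; [|destruct Cp as [[x E]|E]; discriminate].
    destruct Cp as [[x [_ E]]|[E|E]]; try discriminate. injection E as ->.
    exact (touching_through_vertical_asymptote f1 f2 a b c q Ha nCq Hpar).
  - destruct HC as [[a [b [c [Ha ->]]]]|[s [t [Hs ->]]]]; [|destruct Cp as [[x E]|E]; discriminate].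
    destruct Cp as [[x [_ E]]|[E|E]]; try discriminate. injection E as ->.
    exact (touching_through_horizontal_asymptote f1 f2 a b c q H1 H2 Ha nCq Hpar).
  - destruct HC as [[a [b [c [Ha ->]]]]|[s [t [Hs ->]]]];
      [destruct Cp as [[x [_ E]]|[E|E]]; discriminate|].
    exact (touching_through_line_at_infinity f1 f2 s t q Hs nCq Hpar).
Qed.
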